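(* Let $(\mathbf{L},\mathbf{R})\in\mathcal{P}_{\mathsf N}$ be balanced and suppose the associated inequality $\sum_{n=1}^{m_L}\mathsf S(X_n)\ge\sum_{n=1}^{m_R}\mathsf S(Y_n)$ is a holographic entropy inequality. Then $(\mathbf{L},\mathbf{R})$ obeys region dominance: for every nonempty $X\subseteq[\mathsf N+1]$, the number of columns of $\mathbf{L}$ having a $1$ in every row indexed by $X$ is at most the number of columns of $\mathbf{R}$ having a $1$ in every row indexed by $X$, i.e. $\big|\bigwedge_{i\in X}\mathbf{L}_{(i)}\big|\le\big|\bigwedge_{i\in X}\mathbf{R}_{(i)}\big|$.
   Context: $\mathcal{P}_{\mathsf N}$ denotes the set of pairs $(\mathbf{L},\mathbf{R})$ of $(0,1)$-matrices, $\mathbf{L}$ of size $(\mathsf N+1)\times m_L$ and $\mathbf{R}$ of size $(\mathsf N+1)\times m_R$, such that some index $p\in[\mathsf N+1]$ (the purifier) has row $p$ of $\mathbf{L}$ and row $p$ of $\mathbf{R}$ both zero. $\mathbf{A}_{(i)}$ is the $i$-th row; $|v|=\sum_k|v_k|$; $\wedge$ is bitwise AND. The pair is balanced if $|\mathbf{L}_{(i)}|=|\mathbf{R}_{(i)}|$ for all $i\in[\mathsf N+1]$. Let $X_n\subseteq[\mathsf N+1]$ be the set of rows in which column $n$ of $\mathbf{L}$ has a $1$, and $Y_n$ likewise for $\mathbf{R}$. Min-cut function: let $G$ be a finite undirected graph with vertex set $\mathscr V$, nonnegative edge weights $w$, and $\mathsf N+1$ distinguished distinct (external) vertices labeled $1,\dots,\mathsf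 N+1$. For $X\subseteq[\mathsf N+1]$, $\mathsf S_G(X)=\min\{\sum_{e\in\mathscr C(V)}w(e): V\subseteq\mathscr V,\ V\cap\{\text{external vertices}\}=\text{the vertices labeled by }X\}$, where $\mathscr C(V)$ is the set of edges with exactly one endpoint in $V$. The inequality is a holographic entropy inequality (HEI) if $\sum_n\mathsf S_G(X_n)\ge\sum_n\mathsf S_G(Y_n)$ holds for every such weighted graph $G$. *)

From HB Require Import structures.
From mathcomp Require Import all_boot all_order all_algebra.
Set Implicit Arguments. Unset Strict Implicit. Unset Printing Implicit Defensive.
Import Order.TTheory GRing.Theory Num.Theory.
Local Open Scope ring_scope.

(* (0,1)-matrices are boolean matrices 'M[bool]_(N.+1, m); rows are indexed
   by 'I_(N.+1) (representing [N+1]), columns by 'I_m. *)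

Definition in_PN (N mL mR : nat) (L : 'M[bool]_(N.+1, mL)) (R : 'M[bool]_(N.+1, mR)) : Prop :=
  exists p : 'I_(N.+1), (forall n, L p n = false) /\ (forall n, R p n = false).

Definition row_weight (N m : nat) (A : 'M[bool]_(N.+1, m)) (i : 'I_(N.+1)) : nat :=
  #|[set n : 'I_m | A i n]|.

Definition balanced (N mL mR : nat) (L : 'M[bool]_(N.+1, mL)) (R : 'M[bool]_(N.+1, mR)) : Prop :=
  forall i, row_weight L i = row_weight R i.

Definition col_region (N m : nat) (A : 'M[bool]_(N.+1, m)) (n : 'I_m) : {set 'I_(N.+1)} :=
  [set i | A i n].

(* Weighted undirected graph: finite vertex type V, symmetric nonnegative
   weight w x y (total weight of edges between x and y), and injective
   labelling ext of the N+1 external vertices. *)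
Definition cut_weight (K : realFieldType) (V : finType) (w : V -> V -> K) (U : {set V}) : K :=
  \sum_(x in U) \sum_(y in ~: U) w x y.

Definition feasible (N : nat) (V : finType) (ext : 'I_(N.+1) -> V)
    (X : {set 'I_(N.+1)}) (U : {set V}) : bool :=
  [forall i, (ext i \in U) == (i \in X)].

(* Min-cut function S_G(X); the set ext @: X is always feasible (ext injective),
   so it serves as the initial value of the min. *)
Definition mincut (K : realFieldType) (N : nat) (V : finType) (w : V -> V -> K)
    (ext : 'I_(N.+1) -> V) (X : {set 'I_(N.+1)}) : K :=
  \big[Num.min/cut_weight w (ext @: X)]_(U : {set V} | feasible ext X U) cut_weight w U.

Definition HEI (K : realFieldType) (N mL mR : nat)
    (L : 'M[bool]_(N.+1, mL)) (R : 'M[bool]_(N.+1, mR)) : Prop :=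
  forall (V : finType) (w : V -> V -> K) (ext : 'I_(N.+1) -> V),
    (forall x y, 0 <= w x y) -> (forall x y, w x y = w y x) -> injective ext ->
    \sum_(n < mR) mincut w ext (col_region R n)
      <= \sum_(n < mL) mincut w ext (col_region L n).

Definition region_count (N m : nat) (A : 'M[bool]_(N.+1, m)) (X : {set 'I_(N.+1)}) : nat :=
  #|[set n : 'I_m | [forall i in X, A i n]]|.

Definition region_dominance (N mL mR : nat)
    (L : 'M[bool]_(N.+1, mL)) (R : 'M[bool]_(N.+1, mR)) : Prop :=
  forall X : {set 'I_(N.+1)}, X != set0 -> (region_count L X <= region_count R X)%N.

From mathcomp Require Import all_boot all_order all_algebra.
From mathcomp Require Import zify.
From mathcomp Require Import reals.
Set Implicit Arguments. Unset Strict Implicit. Unset Printing Implicit Defensive.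
Import Order.TTheory GRing.Theory Num.Theory.
Local Open Scope ring_scope.

(* Test the inequality on a star graph whose leaves are the external vertices:
   with leaf weights g, the min cut of Y is the cheaper of the two ways of
   separating Y around the centre, min (sum_(i in Y) g i) (sum_(i notin Y) g i).
   If the purifier p lies in X, no column of L meets every row of X and there
   is nothing to prove.  Otherwise give weight 1 to the leaves of X and #|X| - 1
   to p.  Every column region Y avoids p, and its min cut is then
   #|X :&: Y| - [X \subset Y].  Summed over the columns, the first term is
   sum_(i in X) |A_(i)|, equal for L and R by balance, and the second is the
   region count, so the entropy inequality says exactly that region counts of L
   are dominated by those of R. *)

Lemma big_option (R : Type) (idx : R) (op : R -> R -> R) (T : finType)
    (P : pred (option T)) (F : option T -> R) :
  \big[op/idx]_(x | P x) F x =
    if P None then op (F None) (\big[op/idx]_(i | P (Some i)) F (Some i))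
    else \big[op/idx]_(i | P (Some i)) F (Some i).
Proof.
have -> : index_enum (option T) = None :: map Some (index_enum T).
  by rewrite /index_enum !unlock /= /option_enum -enumT enumT unlock.
by rewrite big_cons big_map.
Qed.

Section StarGraph.
Variables (K : realFieldType) (N : nat) (g : 'I_(N.+1) -> K).

(* [None] is the centre of the star and [Some i] the leaf labelled i. *)
Definition star_weight (x y : option 'I_(N.+1)) : K :=
  match x, y with Some i, None | None, Some i => g i | _, _ => 0 end.

Lemma star_weight_sym x y : star_weight x y = star_weight y x.
Proof. by case: x y => [i|] [j|]. Qed.

Lemma star_weight_ge0 : (forall i, 0 <= g i) -> forall x y, 0 <= star_weight x y.
Proof. by move=> g_ge0 [i|] [j|] /=. Qed.

Lemma cut_weight_star (U : {set option 'I_(N.+1)}) :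
  cut_weight star_weight U = \sum_(i | (Some i \in U) != (None \in U)) g i.
Proof.
have leafE i : \sum_(y in ~: U) star_weight (Some i) y = if None \in U then 0 else g i.
  by rewrite big_option /= big1 ?addr0 ?in_setC; case: (None \in U).
have centerE : \sum_(y in ~: U) star_weight None y = \sum_(i | Some i \notin U) g i.
  rewrite big_option /= in_setC; case: (None \in U); rewrite ?add0r;
  by apply: eq_bigl => i; rewrite in_setC.
rewrite /cut_weight big_option; under eq_bigr do rewrite leafE.
case: (boolP (None \in U)) => centerU.
  by rewrite centerE big1_eq addr0; apply: eq_bigl => i; case: (_ \in U).
by apply: eq_bigl => i; case: (_ \in U).
Qed.

Lemma mincut_star (Y : {set 'I_(N.+1)}) :
  mincut star_weight Some Y = Num.min (\sum_(i in Y) g i) (\sum_(i in ~: Y) g i).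
Proof.
have cutE U : feasible Some Y U ->
    cut_weight star_weight U = if None \in U then \sum_(i in ~: Y) g i else \sum_(i in Y) g i.
  move=> /forallP feas; rewrite cut_weight_star.
  by case: ifP => _; apply: eq_bigl => i; rewrite (eqP (feas i)) ?inE; case: (i \in Y).
have feas_leaves : feasible Some Y (Some @: Y).
  by apply/forallP => i; rewrite (mem_imset _ _ (@Some_inj _)).
have feas_center : feasible Some Y (None |: Some @: Y).
  by apply/forallP => i; rewrite !inE (mem_imset _ _ (@Some_inj _)).
have center_leaves : None \in Some @: Y = false by apply/negbTE/imsetP => -[].
rewrite /mincut; apply/le_anti/andP; split.
  rewrite le_min; apply/andP; split.
    by apply: (bigmin_inf _ _ _ _ feas_leaves); rewrite cutE // center_leaves.
  by apply: (bigmin_inf _ _ _ _ feas_center); rewrite cutE // setU11.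
apply/bigmin_geP; split; first by rewrite cutE // center_leaves ge_min lexx.
by move=> U /cutE ->; case: ifP => _; rewrite ge_min lexx ?orbT.
Qed.
End StarGraph.

Section PurifierWeights.
Variables (N : nat) (X : {set 'I_(N.+1)}) (p : 'I_(N.+1)).

Definition purifier_weight (i : 'I_(N.+1)) : nat := (i \in X) + (i == p) * #|X|.-1.

Lemma sum_purifier_weight_in (Y : {set 'I_(N.+1)}) :
  p \notin Y -> (\sum_(i in Y) purifier_weight i = #|X :&: Y|)%N.
Proof.
move=> pY; rewrite -sum1_card [RHS]big_mkcond [LHS]big_mkcond.
apply: eq_bigr => i _; rewrite inE /purifier_weight.
case: (boolP (i \in Y)) => iY; last by rewrite andbF.
have -> : (i == p) = false by apply: contraNF pY => /eqP <-.
by rewrite andbT mul0n addn0; case: (i \in X).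
Qed.

Lemma sum_purifier_weight_out (Y : {set 'I_(N.+1)}) :
  p \notin Y -> (\sum_(i in ~: Y) purifier_weight i = #|X :\: Y| + #|X|.-1)%N.
Proof.
move=> pY; rewrite big_split /=; congr (_ + _)%N.
  rewrite -sum1_card big_mkcond [RHS]big_mkcond; apply: eq_bigr => i _.
  by rewrite !inE; case: (i \in X); case: (i \in Y).
rewrite (bigD1 p) ?inE //= eqxx mul1n big1 ?addn0 // => i /andP[_ /negbTE ->].
by rewrite mul0n.
Qed.

Lemma mincut_purifier_star (K : realFieldType) (Y : {set 'I_(N.+1)}) :
  X != set0 -> p \notin Y ->
  mincut (star_weight (fun i => (purifier_weight i)%:R : K)) Some Y =
    (#|X :&: Y| - (X \subset Y))%:R.
Proof.
move=> X0 pY; rewrite mincut_star -!natr_sum -natr_min.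
rewrite sum_purifier_weight_in // sum_purifier_weight_out //; congr _%:R.
have := cardsID Y X; have := card_gt0 X; rewrite X0.
have [XY | /negbTE XnY] := boolP (X \subset Y).
  by move: XY; rewrite -setD_eq0 => /eqP ->; rewrite cards0 minEnat; lia.
have := card_gt0 (X :\: Y); rewrite setD_eq0 XnY minEnat /=; lia.
Qed.
End PurifierWeights.

Lemma card_set_sum (T : finType) (P : pred T) : #|[set x | P x]| = (\sum_x P x)%N.
Proof. by rewrite -sum1_card big_mkcond; apply: eq_bigr => x _; rewrite inE; case: (P x). Qed.

Section RegionCounting.
Variables (N m : nat) (A : 'M[bool]_(N.+1, m)) (X : {set 'I_(N.+1)}).

Lemma sum_card_meet_col_region :
  (\sum_n #|X :&: col_region A n| = \sum_(i in X) row_weight A i)%N.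
Proof.
rewrite /row_weight; under eq_bigr do rewrite -[X :&: _]setIdE card_set_sum.
under [RHS]eq_bigr do rewrite card_set_sum.
rewrite exchange_big [RHS]big_mkcond; apply: eq_bigr => i _.
by case: (i \in X) => /=; rewrite ?big1_eq.
Qed.

Lemma sum_subset_col_region :
  (\sum_n (X \subset col_region A n) = region_count A X)%N.
Proof.
rewrite /region_count card_set_sum; apply: eq_bigr => n _; congr nat_of_bool.
by apply/subsetP/forall_inP => sub_col i /sub_col; rewrite inE.
Qed.

Lemma sum_star_cut_add_region_count : X != set0 ->
  (\sum_n (#|X :&: col_region A n| - (X \subset col_region A n)) + region_count A X
    = \sum_(i in X) row_weight A i)%N.
Proof.
move=> X0; rewrite -sum_subset_col_region -big_split -sum_card_meet_col_region.
apply: eq_bigr => n _; apply: subnK.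
by case: (boolP (X \subset _)) => // /setIidPl ->; rewrite card_gt0.
Qed.

Lemma region_count_zero_row (p : 'I_(N.+1)) :
  (forall n, A p n = false) -> p \in X -> region_count A X = 0%N.
Proof.
move=> Ap0 pX; apply/eqP; rewrite cards_eq0; apply/eqP/setP => n.
by rewrite !inE; apply/negbTE/forall_inP => /(_ p pX); rewrite Ap0.
Qed.
End RegionCounting.

Theorem theorem5 (K : realType) (N mL mR : nat)
    (L : 'M[bool]_(N.+1, mL)) (R : 'M[bool]_(N.+1, mR)) :
  in_PN L R -> balanced L R -> HEI K L R -> region_dominance L R.
Proof.
move=> [p [Lp0 Rp0]] bal hei X X0.
have [pX | pX] := boolP (p \in X); first by rewrite (region_count_zero_row Lp0).
have := hei _ _ Some (star_weight_ge0 (fun i => ler0n K (purifier_weight X p i)))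
  (star_weight_sym _) (@Some_inj _).
under eq_bigr => n _ do rewrite mincut_purifier_star ?inE ?Rp0 //.
under [in X in _ <= X]eq_bigr => n _ do rewrite mincut_purifier_star ?inE ?Lp0 //.
rewrite -!natr_sum ler_nat => le_cuts.
have := sum_star_cut_add_region_count L X0.
rewrite (eq_bigr _ (fun i _ => bal i)) -(sum_star_cut_add_region_count R X0).
lia.
Qed.
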